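(* Let $\xi$ be a DoS sequence that is not an edge case, let $\mathscr{L}$ be a symmetric irreducible graph Laplacian with largest eigenvalue $\lambda_N(\mathscr{L})$, and let $t_1=0$, $t_{k+1}=t_k+\Delta_k$, where $\Delta_k=\Delta_0$ if $t_k\in[0,h_1+\tau_1)$, with $\Delta_0>0$ satisfying $\lvert1-\Delta_0\lambda_N(\mathscr{L})\rvert<1$, and $\Delta_k=\min\{\Delta_0,\ (1-\hat B_d(h_n+\tau_n))/(\gamma_1\hat B_f(h_n))\}$ if $t_k\in[h_n+\tau_n,h_{n+1}+\tau_{n+1})$, $n\in\mathbb{N}_+$, with $\gamma_1>1$ and $\hat B_d,\hat B_f$ generated by the DoS estimator. Then there exist a finite $\check t\geqslant 0$, constants $\underline{\Delta}$ and $\bar\Delta$, a duration-bound $B_d$ and a frequency-bound $B_f$ of $\xi$ such that $0<\underline{\Delta}\leqslant\Delta_k<+\infty$ for all $t_k\geqslant 0$, $\Delta_k\leqslant\bar\Delta$ for all $t_k\geqslant\check t$, $\lvert1-\bar\Delta\lambda_N(\mathscr{L})\rvert<1$, and $B_d+B_f\bar\Delta<1$.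
   Context: A DoS sequence $\xi=\{H_n\}$ is a finite or infinite sequence of sets $H_n := \{h_n\}\cup[h_n,h_n+\tau_n)$, where $h_1\geqslant 0$, $\tau_n\geqslant 0$ and $h_{n+1} > h_n+\tau_n$ for all $n$. If $\xi$ has only $m$ elements, the convention $h_{n}=h_{n}+\tau_{n}=+\infty$ for $n>m$ is used. For $0\leqslant \tau\leqslant s$ let $\Xi(\tau,s) := \bigcup_n H_n\cap[\tau,s]$ and $n_\xi(\tau,s) := \operatorname{card}(\{h_n\}_n\cap[\tau,s])$; $\lvert\cdot\rvert$ is Lebesgue measure. A constant $B_d\in[0,1]$ is a duration-bound of $\xi$ if there is $0<\kappa<+\infty$ with $\lvert \Xi(0,t)\rvert\leqslant \kappa + B_d t$ for all $t\geqslant 0$. A constant $B_f\in[0,+\infty)$ is a frequency-bound of $\xi$ if there is an integer $0<\Lambda<+\infty$ with $n_\xi(0,t)\leqslant \Lambda + B_f t$ for all $t\geqslant 0$; if no such finite $B_f$ exists, the frequency-bound is $+\infty$. $\mathcal{D}(\xi)$, $\mathcal{F}(\xi)$ are the sets of duration- and frequency-bounds. $\xi$ is an edge case if (i) $\inf\mathcal{D}(\xi)=1$, or (ii) $\inf\mathcal{F}(\xi)=+\infty$, or (iii) for every $\Gamma>0$ there is $n$ with $\tau_n>\Gamma$. DoS estimator (parameters $2\leqslant\ell\in\mathbb{N}_+$, $0<\epsilon_0<1$, $0<\theta<1$): with $B_d(i) := \frac{\lvert \Xi(0,h_i+\tau_i)\rvert}{h_i+\tau_i}$ and $B_f(i)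 := \frac{i}{h_i}$, $\hat B_d(t) = \epsilon_0$ for $t\in[0,h_\ell+\tau_\ell)$, $\hat B_d(t) = \max_{\ell\leqslant i\leqslant n}\{\epsilon_0,\ \theta B_d(i)+(1-\theta)\}$ for $t\in[h_n+\tau_n, h_{n+1}+\tau_{n+1})$, $n\geqslant \ell$; $\hat B_f(t) = \epsilon_0$ for $t\in[0,h_\ell)$, $\hat B_f(t) = \max_{\ell\leqslant i\leqslant n}\{\epsilon_0,\ B_f(i)/\theta\}$ for $t\in[h_n,h_{n+1})$, $n\geqslant\ell$. *)

From HB Require Import structures.
From mathcomp Require Import all_boot all_order all_algebra.
From mathcomp Require Import all_classical all_reals all_analysis.
Set Implicit Arguments. Unset Strict Implicit. Unset Printing Implicit Defensive.
Import Order.TTheory GRing.Theory Num.Theory.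
Local Open Scope classical_set_scope.
Local Open Scope ring_scope.

Section DoS.
Variable R : realType.

(* A DoS sequence is given by its length m (None = infinite, Some k = k
   elements) and real sequences h, tau, indexed from 1 (index 0 unused). *)
Definition indom (m : option nat) (n : nat) : bool :=
  (1 <= n)%N && (if m is Some k then (n <= k)%N else true).

Definition endE (m : option nat) (h tau : nat -> R) (n : nat) : \bar R :=
  if indom m n then (h n + tau n)%:E else +oo%E.

Definition DoS_seq (m : option nat) (h tau : nat -> R) : Prop :=
  (indom m 1 -> 0 <= h 1%N) /\
  (forall n, indom m n -> 0 <= tau n) /\
  (forall n, indom m n -> indom m n.+1 -> h n + tau n < h n.+1).

Definition Hset (h tau : nat -> R) (n : nat) : set R :=
  [set h n] `|` [set x | h n <= x < h n + tau n].

Definition Xi (m : option nat) (h tau : nat -> R) (a s : R) : set R :=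
  [set x | exists n, indom m n /\ Hset h tau n x] `&` [set x | a <= x <= s].

Definition muXi (m : option nat) (h tau : nat -> R) (a s : R) : \bar R :=
  (@lebesgue_measure R) (Xi m h tau a s).

Definition nxi (m : option nat) (h : nat -> R) (a s : R) : \bar R :=
  \esum_(x in [set h n | n in [set n | indom m n]] `&` [set x | (a <= x <= s)%R])
     (1%E : \bar R).

Definition durBound (m : option nat) (h tau : nat -> R) (Bd : R) : Prop :=
  0 <= Bd <= 1 /\
  exists kappa : R, 0 < kappa /\
    forall t : R, 0 <= t -> (muXi m h tau 0 t <= (kappa + Bd * t)%:E)%E.

Definition freqBound (m : option nat) (h : nat -> R) (Bf : R) : Prop :=
  0 <= Bf /\
  exists Lambda : nat, (0 < Lambda)%N /\
    forall t : R, 0 <= t -> (nxi m h 0 t <= (Lambda%:R + Bf * t)%:E)%E.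

Definition durBounds (m : option nat) (h tau : nat -> R) : set R :=
  [set Bd | durBound m h tau Bd].

Definition freqBounds (m : option nat) (h : nat -> R) : set (\bar R) :=
  [set x | (exists Bf, x = Bf%:E /\ freqBound m h Bf) \/
           (x = +oo%E /\ ~ (exists Bf, freqBound m h Bf))].

Definition edge_case (m : option nat) (h tau : nat -> R) : Prop :=
  inf (durBounds m h tau) = 1 \/
  ereal_inf (freqBounds m h) = +oo%E \/
  (forall Gamma : R, 0 < Gamma -> exists n, indom m n /\ Gamma < tau n).

Definition Bd_i (m : option nat) (h tau : nat -> R) (i : nat) : R :=
  fine (muXi m h tau 0 (h i + tau i)) / (h i + tau i).

Definition Bf_i (h : nat -> R) (i : nat) : R := i%:R / h i.

(* \hat B_d(t) = eps0 on [0, h_l + tau_l), and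
   max_{l <= i <= n} {eps0, theta B_d(i) + (1 - theta)} on
   [h_n + tau_n, h_{n+1} + tau_{n+1}); since h_i + tau_i is increasing, the
   indices l <= i <= n are exactly those with h_i + tau_i <= t. *)
Definition Bdhat (m : option nat) (h tau : nat -> R) (ell : nat) (eps0 theta : R)
  (t : R) : R :=
  sup ([set eps0] `|`
       [set theta * Bd_i m h tau i + (1 - theta) | i in
          [set i | (ell <= i)%N /\ indom m i /\ h i + tau i <= t]]).

Definition Bfhat (m : option nat) (h : nat -> R) (ell : nat) (eps0 theta : R)
  (t : R) : R :=
  sup ([set eps0] `|`
       [set Bf_i h i / theta | i in
          [set i | (ell <= i)%N /\ indom m i /\ h i <= t]]).

Definition graph_laplacian (N : nat) (L : 'M[R]_N) : Prop :=
  (forall i j, i != j -> L i j <= 0) /\ (forall i, \sum_j L i j = 0).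

Definition symmetric_mx (N : nat) (L : 'M[R]_N) : Prop := L^T = L.

(* irreducible: the directed graph of nonzero entries is strongly connected *)
Definition irreducible_mx (N : nat) (L : 'M[R]_N) : Prop :=
  forall i j, connect (fun a b => L a b != 0) i j.

Definition largest_eigenvalue (N : nat) (L : 'M[R]_N) (lam : R) : Prop :=
  eigenvalue L lam /\ (forall a, eigenvalue L a -> a <= lam).

End DoS.

(* Outside the edge cases there are a duration-bound B0 < 1 and a finite
   frequency-bound; the latter makes the attack starts h_n grow at least
   linearly in n, so every t >= h_1 + tau_1 lies in some
   [h_n + tau_n, h_{n+1} + tau_{n+1}) and the adaptive rule applies.  Since
   the gap between the first two attacks is never attacked, B0 < 1 keeps all
   ratios B_d(i), i >= 2, below one constant c < 1; the ratios B_f(i) are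
   bounded as well.  Their suprema Sd < 1 and F over i >= ell are again a
   duration- and a frequency-bound.  The estimates stay in
   [eps0, max(eps0, theta Sd + 1 - theta)] and [eps0, max(eps0, F / theta)],
   which bounds Delta_k from below.  Once t_k has passed attacks i at which
   B_d(i) and B_f(i) are close enough to Sd and F, the estimates dominate Sd
   and F, hence Delta_k <= Dbar := min(Delta0, (1 - Sd) / (gamma1 F)), and
   F Dbar <= (1 - Sd) / gamma1 < 1 - Sd. *)

From HB Require Import structures.
From mathcomp Require Import all_boot all_order all_algebra.
From mathcomp Require Import all_classical all_reals all_analysis.
From mathcomp Require Import lra.
Import Order.TTheory GRing.Theory Num.Theory.
Local Open Scope classical_set_scope.
Local Open Scope ring_scope.

Lemma fsum_one_ord {R : realType} M :
  (\sum_(i \in `I_M) (1%E : \bar R) = M%:R%:E)%E.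
Proof. by rewrite -fsbig_ord sumEFin sumr_const card_ord. Qed.

Lemma esum_one_le_card {R : realType} (P : set nat) M : P `<=` `I_M ->
  (\esum_(i in P) (1%E : \bar R) <= M%:R%:E)%E.
Proof.
move=> PM; apply: ge_ereal_sup => _ [X [finX XP] <-].
rewrite -fsum_one_ord; apply: lee_fsum_nneg_subset => //.
by apply/subsetP => x /XP /PM.
Qed.

Lemma esum_one_ge_card {R : realType} (P : set nat) j :
  (forall n, (1 <= n <= j)%N -> P n) ->
  (j%:R%:E <= \esum_(i in P) (1%E : \bar R))%E.
Proof.
move=> HP; apply: esum_ge; exists (succn @` `I_j).
  split; first exact/finite_image/finite_II.
  by move=> _ [n /= nj <-]; apply: HP.
by rewrite fsbig_image ?fsum_one_ord // => x y _ _ [].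
Qed.

Lemma lebesgue_measure_itv_cc {R : realType} (a b : R) : a <= b ->
  lebesgue_measure `[a, b]%classic = (b - a)%:E.
Proof.
move=> ab; rewrite lebesgue_measure_itv /= lte_fin.
case: ltP => [_|ba]; first by rewrite EFinB.
have -> : b = a by apply/eqP; rewrite eq_le ab ba.
by rewrite subrr.
Qed.

Lemma lebesgue_measure_itv_oo {R : realType} (a b : R) : a < b ->
  lebesgue_measure `]a, b[%classic = (b - a)%:E.
Proof. by move=> ab; rewrite lebesgue_measure_itv /= lte_fin ab EFinB. Qed.

Lemma lebesgue_measure_le_itv {R : realType} {A : set R} {a b : R} :
  measurable A -> A `<=` `[a, b]%classic -> a <= b ->
  (lebesgue_measure A <= (b - a)%:E)%E.
Proof.
move=> mA Aab ab; rewrite -lebesgue_measure_itv_cc //.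
by apply: le_measure; rewrite ?inE //; exact: measurable_itv.
Qed.

Lemma sup_setU1_bounds {R : realType} (a M : R) (A : set R) : ubound A M ->
  [/\ a <= sup ([set a] `|` A), sup ([set a] `|` A) <= Num.max a M
    & forall x, A x -> x <= sup ([set a] `|` A)].
Proof.
move=> AM.
have ub : ubound ([set a] `|` A) (Num.max a M).
  by move=> y [->|/AM yM]; rewrite le_max ?lexx // yM orbT.
have hub : has_ubound ([set a] `|` A) by exists (Num.max a M).
split; first by apply: sup_ubound => //; left.
  by apply: ge_sup => //; exists a; left.
by move=> x Ax; apply: sup_ubound => //; right.
Qed.

Lemma sup_image_bounds {R : realType} {I : Type} (D : set I) (f : I -> R) c :
  (forall i, D i -> 0 <= f i <= c) ->
  [/\ 0 <= sup (f @` D), sup (f @` D) <= Num.max 0 c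
    & forall i, D i -> f i <= sup (f @` D)].
Proof.
move=> Hf.
have ub : ubound (f @` D) c by move=> _ [i Di <-]; case/andP: (Hf i Di).
have le_sup i : D i -> f i <= sup (f @` D).
  by move=> Di; apply: (sup_ubound (ex_intro _ c ub)); exists i.
case: (pselect (exists i, D i)) => [[i Di]|nD].
  have f_ge0 : 0 <= f i by case/andP: (Hf i Di).
  split => //; first exact: le_trans f_ge0 (le_sup i Di).
  by rewrite le_max; apply/orP; right; apply: ge_sup => //; exists (f i), i.
have -> : f @` D = set0 by apply/seteqP; split => // x [i Di _]; case: nD; exists i.
by split => [||i Di]; rewrite ?sup0 ?le_max ?lexx //; case: nD; exists i.
Qed.

Lemma ler_div_le {R : numFieldType} (a b c d : R) :
  a <= b -> 0 <= b -> 0 < c <= d -> a / d <= b / c.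
Proof.
move=> ab b_ge0 /andP[c_gt0 cd]; have d_gt0 := lt_le_trans c_gt0 cd.
apply: le_trans (_ : b / d <= _); first by rewrite ler_pM2r ?invr_gt0.
by rewrite ler_wpM2l // lef_pV2 ?posrE.
Qed.

Lemma stable_step_le {R : realFieldType} (D0 D lam : R) :
  0 < D0 -> `|1 - D0 * lam| < 1 -> 0 < D <= D0 -> `|1 - D * lam| < 1.
Proof.
rewrite !ltr_norml => D0_gt0 /andP[lo hi] /andP[D_gt0 D_le].
have lam_gt0 : 0 < lam by rewrite -(pmulr_rgt0 _ D0_gt0); lra.
have : D * lam <= D0 * lam by rewrite ler_wpM2r // ltW.
have : 0 < D * lam by rewrite mulr_gt0.
by move=> *; apply/andP; split; lra.
Qed.

Lemma add_mul_min_div_lt1 {R : realFieldType} (D0 S F g : R) :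
  S < 1 -> 0 < F -> 1 < g -> S + F * Num.min D0 ((1 - S) / (g * F)) < 1.
Proof.
move=> S_lt1 F_gt0 g_gt1; have g_gt0 := lt_trans ltr01 g_gt1.
have : F * Num.min D0 ((1 - S) / (g * F)) <= (1 - S) / g.
  apply: le_trans (_ : F * ((1 - S) / (g * F)) <= _).
    by rewrite ler_pM2l // ge_min lexx orbT.
  by rewrite invfM [_^-1 * F^-1]mulrC mulrCA mulVKf ?gt_eqF.
have : (1 - S) / g < 1 - S by rewrite ltr_pdivrMr // ltr_pMr // subr_gt0.
lra.
Qed.

Section DoSSequence.
Context {R : realType} {m : option nat} {h tau : nat -> R}.
Hypothesis HD : DoS_seq m h tau.

Local Notation dom := (indom m).
Local Notation e n := (h n + tau n).

Lemma indom_le {n k} : dom n -> (1 <= k <= n)%N -> dom k.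
Proof.
rewrite /indom; case: m => [j|] /andP[_ nj] /andP[-> kn] //=.
exact: leq_trans kn nj.
Qed.

Lemma indom_ge1 {n} : dom n -> (1 <= n)%N.
Proof. by case/andP. Qed.

Lemma h_le_end {n} : dom n -> h n <= e n.
Proof. by case: HD => _ [tau_ge0 _] /tau_ge0; rewrite lerDl. Qed.

Lemma end_lt_h {i j} : dom j -> (1 <= i)%N -> (i < j)%N -> e i < h j.
Proof.
case: HD => _ [_ gapS].
elim: j => [//|j IH] dj i_ge1 ij.
have dj' : dom j by apply: (indom_le dj); rewrite (leq_trans i_ge1) //= -ltnS.
have hjS := gapS j dj' dj.
rewrite ltnS leq_eqVlt in ij; case/orP: ij => [/eqP -> //|ij].
apply: lt_trans (IH dj' i_ge1 ij) _.
exact: le_lt_trans (h_le_end dj') hjS.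
Qed.

Lemma h_lt {i j} : dom j -> (1 <= i)%N -> (i < j)%N -> h i < h j.
Proof.
move=> dj i_ge1 ij; apply: le_lt_trans (end_lt_h dj i_ge1 ij).
by apply: h_le_end; apply: (indom_le dj); rewrite i_ge1 ltnW.
Qed.

Lemma h_le {i j} : dom j -> (1 <= i <= j)%N -> h i <= h j.
Proof.
move=> dj /andP[i_ge1]; rewrite leq_eqVlt => /orP[/eqP -> //|ij].
exact/ltW/h_lt.
Qed.

Lemma end_le {i j} : dom j -> (1 <= i <= j)%N -> e i <= e j.
Proof.
move=> dj /andP[i_ge1]; rewrite leq_eqVlt => /orP[/eqP -> //|ij].
exact/ltW/(lt_le_trans (end_lt_h dj i_ge1 ij))/h_le_end.
Qed.

Lemma h_ge0 {n} : dom n -> 0 <= h n.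
Proof.
move=> dn; case: HD => h1_ge0 _.
have n_ge1 := indom_ge1 dn.
apply: le_trans (h1_ge0 (indom_le dn _)) (h_le dn _); by rewrite leqnn n_ge1.
Qed.

Lemma h_gt0 {n} : dom n -> (2 <= n)%N -> 0 < h n.
Proof.
move=> dn n_ge2; have d1 : dom 1 by apply: (indom_le dn); rewrite (leq_trans _ n_ge2).
exact: le_lt_trans (h_ge0 d1) (h_lt dn _ n_ge2).
Qed.

Lemma end_ge0 {n} : dom n -> 0 <= e n.
Proof. by move=> dn; apply: le_trans (h_ge0 dn) (h_le_end dn). Qed.

Lemma h_inj {i j} : dom i -> dom j -> h i = h j -> i = j.
Proof.
move=> di dj hij; case: (ltngtP i j) => // ij.
  by have := h_lt dj (indom_ge1 di) ij; rewrite hij ltxx.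
by have := h_lt di (indom_ge1 dj) ij; rewrite hij ltxx.
Qed.

Lemma index_le_of_end_le {I n s} : dom I -> e I <= s ->
  (s%:E < endE m h tau n.+1)%E -> (I <= n)%N.
Proof.
move=> dI eIs; rewrite leqNgt; apply: contraTN => nI.
have dnS : dom n.+1 by apply: (indom_le dI); rewrite nI.
rewrite /endE dnS lte_fin -leNgt.
by apply: le_trans eIs; apply: end_le dI _; rewrite nI.
Qed.

Lemma nxiE s :
  nxi m h 0 s = \esum_(n in [set n | dom n /\ h n <= s]) (1%E : \bar R).
Proof.
rewrite /nxi; have -> : [set h n | n in [set n | dom n]] `&` [set x | 0 <= x <= s] =
    h @` [set n | dom n /\ h n <= s].
  apply/seteqP; split => x.
    by move=> [[n dn <-] /andP[_ hns]]; exists n.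
  move=> [n [dn hns] <-]; split; first by exists n.
  by rewrite /= h_ge0.
rewrite esum_image // => i j; rewrite !inE => -[di _] [dj _]; exact: h_inj.
Qed.

Lemma index_le_nxi {n} : dom n -> (n%:R%:E <= nxi m h 0 (h n))%E.
Proof.
move=> dn; rewrite nxiE; apply: esum_one_ge_card => k /andP[k_ge1 kn].
by split; [apply: (indom_le dn) | apply: (h_le dn)]; rewrite k_ge1.
Qed.

Lemma freqBound_index_le {B} : freqBound m h B ->
  exists2 G0 : R, 0 <= G0 & forall n, dom n -> n%:R <= G0 + B * h n.
Proof.
move=> [_ [Lam [_ HLam]]]; exists Lam%:R => // n dn.
by have := le_trans (index_le_nxi dn) (HLam _ (h_ge0 dn)); rewrite lee_fin.
Qed.

Lemma freqBound_of_index_le {ell F} : 0 <= F ->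
  (forall i, dom i -> (ell <= i)%N -> i%:R <= F * h i) -> freqBound m h F.
Proof.
move=> F_ge0 HF; split => //; exists ell.+1; split => // s s_ge0.
have Fs_ge0 : 0 <= F * s by rewrite mulr_ge0.
rewrite nxiE; apply: le_trans (@esum_one_le_card R _ (ell + Num.truncn (F * s)).+1 _) _.
  move=> n [dn hns] /=; case: (ltnP n ell) => [nl|ln].
    by rewrite ltnS (leq_trans (ltnW nl)) ?leq_addr.
  have : n%:R <= F * s by apply: le_trans (HF _ dn ln) _; rewrite ler_wpM2l.
  by rewrite -truncn_ge_nat // => ?; rewrite ltnS (leq_trans _ (leq_addl _ _)).
rewrite lee_fin -addSn natrD lerD2l.
by have := truncn_le (F * s); rewrite Fs_ge0.
Qed.

Lemma Xi_measurable a s : measurable (Xi m h tau a s).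
Proof.
apply: measurableI; last first.
  have -> : [set x | a <= x <= s] = `[a, s]%classic.
    by apply/seteqP; split => x /=; rewrite in_itv.
  exact: measurable_itv.
have -> : [set x | exists n, dom n /\ Hset h tau n x] =
    \bigcup_(n in [set n | dom n]) Hset h tau n.
  by apply/seteqP; split => x [n]; [case; exists n | exists n].
apply: bigcup_measurable => n _; apply: measurableU; first exact: measurable_set1.
have -> : [set x | h n <= x < h n + tau n] = `[h n, h n + tau n[%classic.
  by apply/seteqP; split => x /=; rewrite in_itv.
exact: measurable_itv.
Qed.

Lemma muXi_le {s} : 0 <= s -> (muXi m h tau 0 s <= s%:E)%E.
Proof.
move=> s_ge0; have := @lebesgue_measure_le_itv _ _ 0 s (Xi_measurable 0 s).
rewrite subr0; apply => //.
by move=> x [_ /andP[x_ge0 xs]]; rewrite /= in_itv /= x_ge0.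
Qed.

Lemma muXi_fineE {s} : 0 <= s -> muXi m h tau 0 s = (fine (muXi m h tau 0 s))%:E.
Proof.
move=> s_ge0; apply/esym/fineK; rewrite ge0_fin_numE ?measure_ge0 //.
exact: le_lt_trans (muXi_le s_ge0) (ltry s).
Qed.

Lemma muXi_subset {s s'} : Xi m h tau 0 s `<=` Xi m h tau 0 s' ->
  (muXi m h tau 0 s <= muXi m h tau 0 s')%E.
Proof. by move=> sub; apply: le_measure => //; rewrite inE; exact: Xi_measurable. Qed.

Lemma Hset_itv {n x} : dom n -> Hset h tau n x -> h n <= x <= e n.
Proof.
move=> dn [-> | /andP[hx xe]]; first by rewrite lexx h_le_end.
by rewrite hx ltW.
Qed.

Lemma muXi_end_le {i} : dom i -> (2 <= i)%N ->
  (muXi m h tau 0 (e i) <= (e i - (h 2 - e 1))%:E)%E.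
Proof.
move=> di i_ge2.
have d1 : dom 1 by apply: (indom_le di); rewrite (leq_trans _ i_ge2).
have d2 : dom 2 by apply: (indom_le di); rewrite i_ge2.
have h2_le : h 2 <= e i by apply: le_trans (h_le_end di); apply: (h_le di); rewrite i_ge2.
have sub : Xi m h tau 0 (e i) `<=` `[0, e 1]%classic `|` `[h 2, e i]%classic.
  move=> x [[n [dn Hx]] /andP[x_ge0 xe]]; have /andP[hx xen] := Hset_itv dn Hx.
  case: (ltnP 1 n) => n1.
    right; rewrite /= in_itv /= xe andbT; apply: le_trans hx.
    by apply: (h_le dn); rewrite n1.
  have n_eq1 : n = 1%N by apply/eqP; rewrite eqn_leq n1 (indom_ge1 dn).
  by left; rewrite /= in_itv /= x_ge0 -n_eq1.
have le_union : (muXi m h tau 0 (e i) <=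
    lebesgue_measure (`[0%R, e 1]%classic `|` `[h 2, e i]%classic))%E.
  apply: le_measure => //; rewrite inE; first exact: Xi_measurable.
  by apply: measurableU; exact: measurable_itv.
apply: le_trans le_union _.
apply: le_trans (measureU2 lebesgue_measure (measurable_itv `[0%R, e 1])
  (measurable_itv `[h 2, e i])) _.
rewrite /= !lebesgue_measure_itv_cc ?end_ge0 // -EFinD lee_fin; lra.
Qed.

Lemma muXi_add_tail {j s} : dom j -> h j <= s -> s < e j ->
  (muXi m h tau 0 s + (e j - s)%:E <= muXi m h tau 0 (e j))%E.
Proof.
move=> dj hjs sej.
have disj : Xi m h tau 0 s `&` `]s, e j[%classic = set0.
  apply/seteqP; split => x // [[_ /andP[_ xs]]]; rewrite /= in_itv /= => /andP[sx _].
  by have := lt_le_trans sx xs; rewrite ltxx.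
have sub : Xi m h tau 0 s `|` `]s, e j[%classic `<=` Xi m h tau 0 (e j).
  move=> x [[Hx /andP[x_ge0 xs]]|]; first by split; rewrite //= x_ge0 (le_trans xs) ?ltW.
  rewrite /= in_itv /= => /andP[sx xe]; have hjx := le_lt_trans hjs sx.
  split; first by exists j; split => //; right; rewrite /= ltW.
  by rewrite /= (ltW xe) andbT (le_trans (h_ge0 dj)) ?ltW.
rewrite -lebesgue_measure_itv_oo // /muXi -measureU //; last exact: Xi_measurable.
apply: le_measure => //; rewrite inE; last exact: Xi_measurable.
by apply: measurableU; [exact: Xi_measurable | exact: measurable_itv].
Qed.

Lemma Xi_sub_last {j s} : dom j -> (forall n, dom n -> h n <= s -> (n <= j)%N) ->
  Xi m h tau 0 s `<=` Xi m h tau 0 (e j).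
Proof.
move=> dj le_j x [[n [dn Hx]] /andP[x_ge0 xs]]; split; first by exists n.
have /andP[hx xen] := Hset_itv dn Hx.
rewrite /= x_ge0 (le_trans xen) // (end_le dj) // indom_ge1 //=.
exact: le_j dn (le_trans hx xs).
Qed.

Lemma Xi_sub_first {ell s} : (forall n, dom n -> h n <= s -> (n < ell)%N) ->
  Xi m h tau 0 s `<=` `[0, \sum_(n < ell) `|e n|]%classic.
Proof.
move=> lt_ell x [[n [dn Hx]] /andP[x_ge0 xs]]; rewrite /= in_itv /= x_ge0 /=.
have /andP[hx xen] := Hset_itv dn Hx.
have nl := lt_ell n dn (le_trans hx xs).
apply: le_trans xen (le_trans (ler_norm _) _).
by rewrite (bigD1 (Ordinal nl)) //= lerDl sumr_ge0.
Qed.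

Lemma freqBound_of_not_edge : ~ edge_case m h tau -> exists B, freqBound m h B.
Proof.
move=> nedge; apply: contra_notP nedge => no_fB; right; left.
rewrite (_ : freqBounds m h = [set +oo%E]) ?ereal_inf1 //.
apply/seteqP; split => x /=; last by move=> ->; right.
by case => [[B [_ fB]]|[-> _]] //; case: no_fB; exists B.
Qed.

Lemma durBound_lt1_of_not_edge : ~ edge_case m h tau ->
  exists2 B, durBound m h tau B & B < 1.
Proof.
move=> nedge.
have dur1 : durBound m h tau 1.
  split; first by rewrite ler01 lexx.
  exists 1; split => // s s_ge0; apply: le_trans (muXi_le s_ge0) _.
  by rewrite lee_fin; lra.
have inf_le1 : inf (durBounds m h tau) <= 1.
  by apply: ge_inf => //; exists 0 => y [/andP[]].
have inf_lt1 : inf (durBounds m h tau) < 1.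
  by rewrite lt_neqAle inf_le1 andbT; apply/eqP => inf_eq1; apply: nedge; left.
by have [B dB B_lt1] := inf_lt (ex_intro _ 1 dur1) inf_lt1; exists B.
Qed.

Lemma Bd_i_uniform_lt1 {B} : durBound m h tau B -> B < 1 ->
  exists2 c, c < 1 & forall i, dom i -> (2 <= i)%N -> 0 <= Bd_i m h tau i <= c.
Proof.
move=> [/andP[B_ge0 _] [k [k_gt0 dur]]] B_lt1.
have [d2|nd2] := boolP (dom 2); last first.
  by exists 0 => // i di i_ge2; case/negP: nd2; apply: (indom_le di); rewrite i_ge2.
set g := h 2 - e 1.
have g_gt0 : 0 < g by rewrite subr_gt0 (end_lt_h d2).
have kg_gt0 : 0 < k + g by lra.
exists ((k + g * B) / (k + g)).
  rewrite ltr_pdivrMr // mul1r.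
  have : g * B < g * 1 by rewrite ltr_pM2l.
  lra.
move=> i di i_ge2.
have ei_gt0 : 0 < e i := lt_le_trans (h_gt0 di i_ge2) (h_le_end di).
rewrite /Bd_i; set x := fine _.
have x_ge0 : 0 <= x by apply: fine_ge0; exact: measure_ge0.
have x_le_dur : x <= k + B * e i.
  by have := dur _ (ltW ei_gt0); rewrite (muXi_fineE (ltW ei_gt0)) lee_fin.
have x_le_gap : x <= e i - g.
  by have := muXi_end_le di i_ge2; rewrite (muXi_fineE (ltW ei_gt0)) lee_fin.
apply/andP; split; first by rewrite divr_ge0 // ltW.
rewrite ler_pdivrMr // mulrAC ler_pdivlMr //.
(* add g times [x <= k + B e_i] to k times [x <= e_i - g] *)
have : 0 <= k * (e i - g - x) by apply: mulr_ge0; lra.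
have : 0 <= g * (k + B * e i - x) by apply: mulr_ge0; lra.
nra.
Qed.

Section LocallyFinite.
Context {G0 G1 : R}.
Hypotheses (G0_ge0 : 0 <= G0) (G1_ge0 : 0 <= G1).
Hypothesis index_le : forall n, dom n -> n%:R <= G0 + G1 * h n.

Lemma ex_last_index (P : pred nat) s :
  (forall n, dom n -> P n -> h n <= s) -> (exists n, dom n && P n) ->
  exists n, [/\ dom n, P n & forall k, dom k -> P k -> (k <= n)%N].
Proof.
move=> hP ex.
have ub k : dom k && P k -> (k <= Num.truncn (G0 + G1 * s))%N.
  move=> /andP[dk Pk].
  have k_le : k%:R <= G0 + G1 * s.
    by apply: le_trans (index_le _ dk) _; rewrite lerD2l ler_wpM2l ?hP.
  by rewrite truncn_ge_nat // (le_trans (ler0n _ _) k_le).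
have [n /andP[dn Pn] nmax] := ex_maxnP ex ub.
by exists n; split => // k dk Pk; apply: nmax; rewrite dk.
Qed.

Lemma end_le_lt_endS {s} : (endE m h tau 1 <= s%:E)%E ->
  exists n, [/\ dom n, e n <= s & (s%:E < endE m h tau n.+1)%E].
Proof.
rewrite /endE; case: ifP => [d1|]; last by rewrite leye_eq.
rewrite lee_fin => e1s.
have ex : exists n, dom n && (e n <= s) by exists 1%N; rewrite d1 e1s.
have [n [dn ens nmax]] :=
  ex_last_index (fun n => e n <= s) s (fun n dn => le_trans (h_le_end dn)) ex.
exists n; split => //; case: ifP => dnS; last by rewrite ltry.
by rewrite lte_fin ltNge; apply/negP => /(nmax _ dnS); rewrite ltnn.
Qed.

Lemma durBound_of_end_le {ell S} : 0 <= S <= 1 ->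
  (forall i, dom i -> (ell <= i)%N -> (muXi m h tau 0 (e i) <= (S * e i)%:E)%E) ->
  durBound m h tau S.
Proof.
move=> /andP[S_ge0 S_le1] dur_end; split; first by rewrite S_ge0.
set C := \sum_(n < ell) `|e n|.
have C_ge0 : 0 <= C by apply: sumr_ge0.
exists (C + 1); split => [|s s_ge0]; first lra.
case: (pselect (exists j, dom j && ((ell <= j)%N && (h j <= s)))) => [ex|none].
  have hP n : dom n -> (ell <= n)%N && (h n <= s) -> h n <= s by move=> _ /andP[].
  have [j [dj /andP[lj hjs] jmax]] := ex_last_index _ s hP ex.
  have le_j n : dom n -> h n <= s -> (n <= j)%N.
    move=> dn hns; case: (leqP ell n) => [ln|nl]; first by apply: jmax; rewrite ?ln.
    exact: leq_trans (ltnW nl) lj.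
  have dur_j := dur_end j dj lj.
  case: (ltP s (e j)) => [s_lt|s_ge].
    (* attack j covers [s, e j], where the measure grows faster than S t *)
    have := le_trans (muXi_add_tail dj hjs s_lt) dur_j.
    rewrite (muXi_fineE s_ge0) -EFinD !lee_fin => tail_le.
    have : 0 <= (1 - S) * (e j - s) by apply: mulr_ge0; lra.
    nra.
  have := le_trans (muXi_subset (Xi_sub_last dj le_j)) dur_j.
  rewrite (muXi_fineE s_ge0) !lee_fin => mu_le.
  have : S * e j <= S * s by rewrite ler_wpM2l.
  lra.
have lt_ell n : dom n -> h n <= s -> (n < ell)%N.
  by move=> dn hns; rewrite ltnNge; apply/negP => ln; apply: none; exists n; rewrite dn ln.
have := lebesgue_measure_le_itv (Xi_measurable 0 s) (Xi_sub_first lt_ell) C_ge0.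
rewrite subr0 -/C -/(muXi m h tau 0 s) (muXi_fineE s_ge0) !lee_fin => mu_le_C.
have : 0 <= S * s by rewrite mulr_ge0.
lra.
Qed.

Lemma Bf_i_le {i} : dom i -> (2 <= i)%N -> 0 < Bf_i h i <= G0 / h 2 + G1.
Proof.
move=> di i_ge2.
have d2 : dom 2 by apply: (indom_le di); rewrite i_ge2.
have [h2_gt0 hi_gt0] := (h_gt0 d2 (leqnn 2), h_gt0 di i_ge2).
rewrite /Bf_i divr_gt0 ?ltr0n ?(leq_trans _ i_ge2) //= ler_pdivrMr // mulrDl.
have : G0 <= G0 / h 2 * h i.
  by rewrite mulrAC ler_pdivlMr // ler_wpM2l //; apply: (h_le di); rewrite i_ge2.
have := index_le _ di.
lra.
Qed.

End LocallyFinite.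

End DoSSequence.

Section Estimator.
Context {R : realType} {m : option nat} {h tau : nat -> R} {ell : nat} {eps0 theta : R}.

Lemma Bdhat_bounds Sd s : 0 <= theta ->
  (forall i, (ell <= i)%N -> indom m i -> Bd_i m h tau i <= Sd) ->
  [/\ eps0 <= Bdhat m h tau ell eps0 theta s,
      Bdhat m h tau ell eps0 theta s <= Num.max eps0 (theta * Sd + (1 - theta))
    & forall i, (ell <= i)%N -> indom m i -> h i + tau i <= s ->
      theta * Bd_i m h tau i + (1 - theta) <= Bdhat m h tau ell eps0 theta s].
Proof.
move=> theta_ge0 Bd_le; have [] := sup_setU1_bounds eps0 (theta * Sd + (1 - theta))
  [set theta * Bd_i m h tau i + (1 - theta) | i in
    [set i | (ell <= i)%N /\ indom m i /\ h i + tau i <= s]].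
  by move=> _ [i [li [di _]] <-]; rewrite lerD2r ler_wpM2l // Bd_le.
by move=> ? ? le_sup; split => // i li di eis; apply: le_sup; exists i.
Qed.

Lemma Bfhat_bounds F s : 0 < theta ->
  (forall i, (ell <= i)%N -> indom m i -> Bf_i h i <= F) ->
  [/\ eps0 <= Bfhat m h ell eps0 theta s,
      Bfhat m h ell eps0 theta s <= Num.max eps0 (F / theta)
    & forall i, (ell <= i)%N -> indom m i -> h i <= s ->
      Bf_i h i / theta <= Bfhat m h ell eps0 theta s].
Proof.
move=> theta_gt0 Bf_le; have [] := sup_setU1_bounds eps0 (F / theta)
  [set Bf_i h i / theta | i in [set i | (ell <= i)%N /\ indom m i /\ h i <= s]].
  by move=> _ [i [li [di _]] <-]; rewrite ler_pM2r ?invr_gt0 // Bf_le.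
by move=> ? ? le_sup; split => // i li di his; apply: le_sup; exists i.
Qed.

End Estimator.

Definition Bd_sup {R : realType} m (h tau : nat -> R) ell : R :=
  sup [set Bd_i m h tau i | i in [set i | (ell <= i)%N /\ indom m i]].

Definition Bf_sup {R : realType} m (h : nat -> R) ell : R :=
  sup [set Bf_i h i | i in [set i | (ell <= i)%N /\ indom m i]].

Section StepSize.
Context {R : realType} {m : option nat} {h tau : nat -> R} {ell : nat}
  {eps0 theta gamma1 Delta0 lamN B0 G0 G1 : R} {t Delta : nat -> R}.
Hypotheses (HD : DoS_seq m h tau) (ell_ge2 : (2 <= ell)%N).
Hypotheses (eps0_gt0 : 0 < eps0) (eps0_lt1 : eps0 < 1).
Hypotheses (theta_gt0 : 0 < theta) (theta_lt1 : theta < 1).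
Hypotheses (Delta0_gt0 : 0 < Delta0) (stable0 : `|1 - Delta0 * lamN| < 1).
Hypothesis gamma1_gt1 : 1 < gamma1.
Hypotheses (durB0 : durBound m h tau B0) (B0_lt1 : B0 < 1).
Hypotheses (G0_ge0 : 0 <= G0) (G1_ge0 : 0 <= G1).
Hypothesis index_le : forall n, indom m n -> n%:R <= G0 + G1 * h n.
Hypothesis t1 : t 1%N = 0.
Hypothesis tS : forall k, (1 <= k)%N -> t k.+1 = t k + Delta k.
Hypothesis Delta_init : forall k, (1 <= k)%N -> 0 <= t k ->
  ((t k)%:E < endE m h tau 1)%E -> Delta k = Delta0.
Hypothesis Delta_adapt : forall k n, (1 <= k)%N -> indom m n ->
  h n + tau n <= t k -> ((t k)%:E < endE m h tau n.+1)%E ->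
  Delta k = Num.min Delta0
    ((1 - Bdhat m h tau ell eps0 theta (h n + tau n)) /
     (gamma1 * Bfhat m h ell eps0 theta (h n))).

Local Notation dom := (indom m).
Local Notation e n := (h n + tau n).
Local Notation Sd := (Bd_sup m h tau ell).
Local Notation F := (Bf_sup m h ell).
Local Notation Bd_est := (Bdhat m h tau ell eps0 theta).
Local Notation Bf_est := (Bfhat m h ell eps0 theta).

Lemma Bd_sup_spec :
  [/\ 0 <= Sd, Sd < 1 & forall i, (ell <= i)%N -> dom i -> Bd_i m h tau i <= Sd].
Proof.
have [c c_lt1 Bd_le_c] := Bd_i_uniform_lt1 HD durB0 B0_lt1.
have [|Sd_ge0 Sd_le le_Sd] :=
  sup_image_bounds [set i | (ell <= i)%N /\ dom i] (Bd_i m h tau) c.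
  by move=> i [li di]; apply: Bd_le_c (leq_trans ell_ge2 li).
split => //; first by apply: le_lt_trans Sd_le _; rewrite gt_max ltr01.
by move=> i li di; apply: le_Sd.
Qed.

Lemma Bf_sup_spec : [/\ 0 <= F,
  forall i, (ell <= i)%N -> dom i -> 0 < Bf_i h i &
  forall i, (ell <= i)%N -> dom i -> Bf_i h i <= F].
Proof.
have Bf_le i : (ell <= i)%N -> dom i -> 0 < Bf_i h i <= G0 / h 2 + G1.
  by move=> li di; apply: (Bf_i_le HD G0_ge0 index_le di (leq_trans ell_ge2 li)).
have [|F_ge0 _ le_F] :=
  sup_image_bounds [set i | (ell <= i)%N /\ dom i] (Bf_i h) (G0 / h 2 + G1).
  by move=> i [li di]; case/andP: (Bf_le i li di) => /ltW ->.
split => // i li di; last exact: le_F.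
by case/andP: (Bf_le i li di).
Qed.

Lemma durBound_Bd_sup : durBound m h tau Sd.
Proof.
have [Sd_ge0 Sd_lt1 le_Sd] := Bd_sup_spec.
apply: (durBound_of_end_le HD G1_ge0 index_le (ell := ell)); first by rewrite Sd_ge0 ltW.
move=> i di li.
have ei_gt0 : 0 < e i.
  exact: lt_le_trans (h_gt0 HD di (leq_trans ell_ge2 li)) (h_le_end HD di).
rewrite (muXi_fineE (ltW ei_gt0)) lee_fin.
by have := le_Sd i li di; rewrite /Bd_i ler_pdivrMr // mulrC.
Qed.

Lemma freqBound_Bf_sup : freqBound m h F.
Proof.
have [F_ge0 _ le_F] := Bf_sup_spec.
apply: (freqBound_of_index_le HD (ell := ell)) => // i di li.
have hi_gt0 := h_gt0 HD di (leq_trans ell_ge2 li).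
by have := le_F i li di; rewrite /Bf_i ler_pdivrMr // mulrC.
Qed.

Lemma Delta_cases {k} : (1 <= k)%N -> 0 <= t k ->
  ((t k)%:E < endE m h tau 1)%E /\ Delta k = Delta0 \/
  exists n, [/\ dom n, e n <= t k, ((t k)%:E < endE m h tau n.+1)%E &
    Delta k = Num.min Delta0 ((1 - Bd_est (e n)) / (gamma1 * Bf_est (h n)))].
Proof.
move=> k_ge1 tk_ge0; case: (ltP (t k)%:E (endE m h tau 1)) => [lt1|ge1].
  by left; split => //; apply: Delta_init.
have [n [dn en tn]] := end_le_lt_endS HD G1_ge0 index_le ge1.
by right; exists n; split => //; apply: Delta_adapt.
Qed.

Lemma Delta_lower_bound :
  exists Dlow, forall k, (1 <= k)%N -> 0 < Dlow <= Delta k.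
Proof.
have gamma1_gt0 : 0 < gamma1 := lt_trans ltr01 gamma1_gt1.
have [_ Sd_lt1 le_Sd] := Bd_sup_spec.
have [_ _ le_F] := Bf_sup_spec.
set Bd_max := Num.max eps0 (theta * Sd + (1 - theta)).
set Bf_max := Num.max eps0 (F / theta).
have Bd_max_lt1 : Bd_max < 1.
  rewrite gt_max eps0_lt1 /=.
  have : theta * Sd < theta * 1 by rewrite ltr_pM2l.
  lra.
have Bf_max_gt0 : 0 < Bf_max by rewrite lt_max eps0_gt0.
set Dlow := Num.min Delta0 ((1 - Bd_max) / (gamma1 * Bf_max)).
have Dlow_gt0 : 0 < Dlow by rewrite lt_min Delta0_gt0 divr_gt0 ?mulr_gt0 ?subr_gt0.
have le_Delta k : (1 <= k)%N -> 0 <= t k -> Dlow <= Delta k.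
  move=> k_ge1 tk_ge0; case: (Delta_cases k_ge1 tk_ge0) => [[_ ->]|[n [_ _ _ ->]]].
    by rewrite ge_min lexx.
  have [_ Bd_est_le _] := Bdhat_bounds (eps0 := eps0) _ (e n) (ltW theta_gt0) le_Sd.
  have [eps0_le Bf_est_le _] := Bfhat_bounds (eps0 := eps0) _ (h n) theta_gt0 le_F.
  rewrite le_min ge_min lexx /= ge_min; apply/orP; right; apply: ler_div_le.
  - by rewrite lerD2l lerN2.
  - by rewrite subr_ge0 (le_trans Bd_est_le) // ltW.
  - by rewrite ler_pM2l // Bf_est_le mulr_gt0 // (lt_le_trans eps0_gt0).
have t_ge0 k : (1 <= k)%N -> 0 <= t k.
  elim: k => // k IH; case: (posnP k) => [-> _|k_gt0 _]; first by rewrite t1.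
  have tk_ge0 := IH k_gt0.
  have := le_Delta k k_gt0 tk_ge0; rewrite tS //; lra.
by exists Dlow => k k_ge1; rewrite Dlow_gt0 le_Delta ?t_ge0.
Qed.

Lemma estimates_eventually_ge : (exists i, (ell <= i)%N /\ dom i) ->
  exists2 I, dom I &
    forall n, dom n -> (I <= n)%N -> Sd <= Bd_est (e n) /\ F <= Bf_est (h n).
Proof.
move=> [i0 [li0 di0]].
have [_ Sd_lt1 le_Sd] := Bd_sup_spec.
have [_ Bf_gt0 le_F] := Bf_sup_spec.
have F_gt0 : 0 < F := lt_le_trans (Bf_gt0 i0 li0 di0) (le_F i0 li0 di0).
have sup_Bd : has_sup [set Bd_i m h tau i | i in [set i | (ell <= i)%N /\ dom i]].
  by split; [exists (Bd_i m h tau i0), i0 | exists Sd => _ [i [li di] <-]; exact: le_Sd].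
have sup_Bf : has_sup [set Bf_i h i | i in [set i | (ell <= i)%N /\ dom i]].
  by split; [exists (Bf_i h i0), i0 | exists F => _ [i [li di] <-]; exact: le_F].
(* q is the slack for which theta * (Sd - q) + (1 - theta) = Sd *)
set q := (1 - theta) * (1 - Sd) / theta.
have q_gt0 : 0 < q by rewrite divr_gt0 // mulr_gt0 // subr_gt0.
have [_ [i1 [li1 di1] <-]] := sup_adherent q_gt0 sup_Bd.
rewrite -/(Bd_sup m h tau ell) => close1.
have q'_gt0 : 0 < (1 - theta) * F by rewrite mulr_gt0 // subr_gt0.
have [_ [i2 [li2 di2] <-]] := sup_adherent q'_gt0 sup_Bf.
rewrite -/(Bf_sup m h ell) => close2.
have dI : dom (maxn i1 i2) by rewrite /maxn; case: ifP.
exists (maxn i1 i2) => // n dn In.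
have [_ _ Bd_ge] := Bdhat_bounds (eps0 := eps0) _ (e n) (ltW theta_gt0) le_Sd.
have [_ _ Bf_ge] := Bfhat_bounds (eps0 := eps0) _ (h n) theta_gt0 le_F.
have ei1_le : e i1 <= e n.
  by apply: (end_le HD dn); rewrite (indom_ge1 di1) (leq_trans (leq_maxl _ _) In).
have hi2_le : h i2 <= h n.
  by apply: (h_le HD dn); rewrite (indom_ge1 di2) (leq_trans (leq_maxr _ _) In).
split.
  apply: le_trans (Bd_ge i1 li1 di1 ei1_le).
  have theta_q : theta * q = (1 - theta) * (1 - Sd).
    by rewrite /q mulrC divfK // gt_eqF.
  have : theta * (Sd - q) < theta * Bd_i m h tau i1 by rewrite ltr_pM2l.
  lra.
apply: le_trans (Bf_ge i2 li2 di2 hi2_le).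
rewrite ler_pdivlMr //.
lra.
Qed.

Lemma Delta_eventually_le : exists tc Dbar,
  [/\ 0 <= tc, 0 < Dbar <= Delta0, Sd + F * Dbar < 1 &
      forall k, (1 <= k)%N -> tc <= t k -> Delta k <= Dbar].
Proof.
have [_ Sd_lt1 _] := Bd_sup_spec.
have [_ Bf_gt0 le_F] := Bf_sup_spec.
have gamma1_gt0 : 0 < gamma1 := lt_trans ltr01 gamma1_gt1.
case: (pselect (exists i, (ell <= i)%N /\ dom i)) => [D_nonempty|D_empty]; last first.
  have F_eq0 : F = 0.
    rewrite /Bf_sup (_ : [set Bf_i h i | i in _] = set0) ?sup0 //.
    by apply/seteqP; split => // x [i Di _]; case: D_empty; exists i.
  exists 0, Delta0; split => //; first by rewrite Delta0_gt0 lexx.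
    by rewrite F_eq0 mul0r addr0.
  move=> k k_ge1 tk_ge0.
  by case: (Delta_cases k_ge1 tk_ge0) => [[_ ->]|[n [_ _ _ ->]]]; rewrite ?ge_min lexx.
have [I dI est_ge] := estimates_eventually_ge D_nonempty.
have F_gt0 : 0 < F.
  by case: D_nonempty => i [li di]; apply: lt_le_trans (Bf_gt0 i li di) (le_F i li di).
set Dbar := Num.min Delta0 ((1 - Sd) / (gamma1 * F)).
exists (e I), Dbar; split.
- by have := end_ge0 HD dI.
- by rewrite lt_min Delta0_gt0 divr_gt0 ?mulr_gt0 ?subr_gt0 //= ge_min lexx.
- exact: add_mul_min_div_lt1.
move=> k k_ge1 eIt; have tk_ge0 := le_trans (end_ge0 HD dI) eIt.
case: (Delta_cases k_ge1 tk_ge0) => [[lt1 _]|[n [dn _ tn ->]]].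
  have d1 : dom 1 by apply: (indom_le dI); rewrite leqnn (indom_ge1 dI).
  move: lt1; rewrite /endE d1 lte_fin ltNge (le_trans _ eIt) //.
  by apply: (end_le HD dI); rewrite leqnn (indom_ge1 dI).
have [Sd_le F_le] := est_ge n dn (index_le_of_end_le HD dI eIt tn).
rewrite le_min ge_min lexx /= ge_min; apply/orP; right; apply: ler_div_le.
- by rewrite lerD2l lerN2.
- by rewrite subr_ge0 ltW.
- by rewrite ler_pM2l // F_le mulr_gt0.
Qed.

Lemma step_size_bounds :
  exists (tcheck Dlow Dbar Bd Bf : R),
    0 <= tcheck /\
    durBound m h tau Bd /\ freqBound m h Bf /\
    (forall k, (1 <= k)%N -> 0 < Dlow <= Delta k) /\
    (forall k, (1 <= k)%N -> tcheck <= t k -> Delta k <= Dbar) /\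
    `|1 - Dbar * lamN| < 1 /\
    Bd + Bf * Dbar < 1.
Proof.
have [Dlow lowerD] := Delta_lower_bound.
have [tc [Dbar [tc_ge0 Dbar_bounds small upperD]]] := Delta_eventually_le.
exists tc, Dlow, Dbar, Sd, F; split => //.
split; first exact: durBound_Bd_sup.
split; first exact: freqBound_Bf_sup.
do 3!split => //; exact: stable_step_le Delta0_gt0 stable0 Dbar_bounds.
Qed.

End StepSize.

Theorem lemma4 (R : realType) (m : option nat) (h tau : nat -> R)
  (N : nat) (L : 'M[R]_N.+1) (lamN : R)
  (ell : nat) (eps0 theta gamma1 Delta0 : R) (t Delta : nat -> R) :
  DoS_seq m h tau -> ~ edge_case m h tau ->
  symmetric_mx L -> graph_laplacian L -> irreducible_mx L ->
  largest_eigenvalue L lamN ->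
  (2 <= ell)%N -> 0 < eps0 < 1 -> 0 < theta < 1 ->
  0 < Delta0 -> `|1 - Delta0 * lamN| < 1 -> 1 < gamma1 ->
  t 1%N = 0 ->
  (forall k, (1 <= k)%N -> t k.+1 = t k + Delta k) ->
  (forall k, (1 <= k)%N -> 0 <= t k -> ((t k)%:E < endE m h tau 1)%E ->
     Delta k = Delta0) ->
  (forall k n, (1 <= k)%N -> indom m n ->
     h n + tau n <= t k -> ((t k)%:E < endE m h tau n.+1)%E ->
     Delta k = Num.min Delta0
       ((1 - Bdhat m h tau ell eps0 theta (h n + tau n)) /
        (gamma1 * Bfhat m h ell eps0 theta (h n)))) ->
  exists (tcheck Dlow Dbar Bd Bf : R),
    0 <= tcheck /\
    durBound m h tau Bd /\ freqBound m h Bf /\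
    (forall k, (1 <= k)%N -> 0 < Dlow <= Delta k) /\
    (forall k, (1 <= k)%N -> tcheck <= t k -> Delta k <= Dbar) /\
    `|1 - Dbar * lamN| < 1 /\
    Bd + Bf * Dbar < 1.
Proof.
(* The Laplacian enters only through the stability condition on Delta0 * lamN. *)
move=> HD nedge _ _ _ _ ell_ge2 /andP[eps0_gt0 eps0_lt1] /andP[theta_gt0 theta_lt1]
  Delta0_gt0 stable0 gamma1_gt1 t1 tS Delta_init Delta_adapt.
have [B0 durB0 B0_lt1] := durBound_lt1_of_not_edge nedge.
have [B1 freqB1] := freqBound_of_not_edge nedge.
have [G0 G0_ge0 index_le] := freqBound_index_le HD freqB1.
exact: (step_size_bounds HD ell_ge2 eps0_gt0 eps0_lt1 theta_gt0 theta_lt1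
  Delta0_gt0 stable0 gamma1_gt1 durB0 B0_lt1 G0_ge0 freqB1.1 index_le
  t1 tS Delta_init Delta_adapt).
Qed.
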